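(* Let $G$ be a circle of circumference $1$ and let $\mathbf{x}\in G^n$ be such that the agents are not on one semicircle. Then for every $i\in N$, $\mathrm{cost}(\mathrm{rc}(\mathbf{x}),x_i)\le\frac14$.
   Context: $d(x,y)$ is the length of the shorter arc between $x,y$; $\hat{x}$ is the antipodal point of $x$. $\mathrm{cost}(P,x_i)=\mathbb{E}_{y\sim P}[d(x_i,y)]$. Agents are on one semicircle if all locations lie in some closed arc of length $1/2$. RC (Random Center) mechanism: the antipodal points $\hat{x}_1,\dots,\hat{x}_n$ partition $G$ into arcs between cyclically consecutive antipodal points; $\mathrm{rc}(\mathbf{x})$ returns the midpoint of each such arc with probability equal to its length (equivalently: pick $y$ uniformly on $G$ and return the midpoint of the arc containing $y$). *)

From Stdlib Require Import Reals Lra List.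
Import ListNotations.
Open Scope R_scope.

(* The circle G of circumference 1 is R/Z; a point is represented by any real,
   two reals denoting the same point iff their difference is an integer. *)

Definition cwpos (x y : R) : R := frac_part (y - x).

Definition cdist (x y : R) : R := Rmin (frac_part (x - y)) (1 - frac_part (x - y)).

Definition antipode (x : R) : R := x + / 2.

Definition on_one_semicircle (n : nat) (x : nat -> R) : Prop :=
  exists c : R, forall i, (i < n)%nat -> cwpos c (x i) <= / 2.

Definition cwgap (a b : R) : R :=
  if Req_EM_T (cwpos a b) 0 then 1 else cwpos a b.

(* length of the arc starting at the antipode of x_j and ending at the
   cyclically next antipodal point (full circle if there is no other one) *)
Definition next_gap (n : nat) (x : nat -> R) (j : nat) : R :=
  fold_right Rmin 1
    (map (fun k => cwgap (antipode (x j)) (antipode (x k))) (seq 0 n)).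

(* j is the first index at its location (so each arc is counted once) *)
Definition first_occ (x : nat -> R) (j : nat) : bool :=
  negb (existsb (fun k => if Req_EM_T (cwpos (x j) (x k)) 0 then true else false)
                (seq 0 j)).

(* cost(rc(x), z): expected distance to z of the RC lottery, which returns the
   midpoint of each arc between cyclically consecutive antipodal points with
   probability equal to the arc's length. *)
Definition rc_cost (n : nat) (x : nat -> R) (z : R) : R :=
  fold_right Rplus 0
    (map (fun j =>
            if first_occ x j then
              next_gap n x j * cdist (antipode (x j) + next_gap n x j / 2) z
            else 0)
         (seq 0 n)).

From Stdlib Require Import Reals Lra Lia List Wellfounded.
Open Scope R_scope.

(* Fix the agent x_i and measure every point by its clockwise
   position t in [0,1) from the antipode of x_i; the distance from such a point
   to x_i is |t - 1/2|.  The antipode of x_i is itself one of the cut points, so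
   the RC arcs are pairwise disjoint subintervals [a_j, a_j + g_j] of [0,1]
   (a_j = position of the antipode of x_j, g_j = its gap to the next antipode).
   The arc with midpoint m and length g contributes g * |m - 1/2|, which by
   convexity of |t - 1/2| is at most the integral of |t - 1/2| over the arc,
   i.e. the increment of the primitive (t - 1/2)|t - 1/2|/2.  Summing over
   disjoint arcs bounds rc_cost by the integral over [0,1], which is 1/4.
   The file first proves the real-analytic facts (list sums, increments of a
   monotone function over disjoint intervals, the midpoint estimate), then the
   circle bookkeeping relating the definitions to positions a_j, and finally
   the theorem.  The bound holds whether or not the agents lie on one
   semicircle. *)

Definition sumR (f : nat -> R) (l : list nat) : R := fold_right Rplus 0 (map f l).

Lemma sumR_le (f h : nat -> R) (l : list nat) :
  (forall j, In j l -> f j <= h j) -> sumR f l <= sumR h l.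
Proof.
  unfold sumR; induction l as [|q t IH]; simpl; intros H; [lra|].
  pose proof (H q (or_introl eq_refl)); pose proof (IH (fun j Hj => H j (or_intror Hj))); lra.
Qed.

Lemma sumR_if (p : nat -> bool) (f : nat -> R) (l : list nat) :
  fold_right Rplus 0 (map (fun j => if p j then f j else 0) l) = sumR f (filter p l).
Proof.
  unfold sumR; induction l as [|q t IH]; simpl; [reflexivity|].
  destruct (p q); simpl; rewrite IH; ring.
Qed.

Lemma sumR_partition (p : nat -> bool) (f : nat -> R) (l : list nat) :
  sumR f l = sumR f (filter p l) + sumR f (filter (fun q => negb (p q)) l).
Proof.
  unfold sumR; induction l as [|q t IH]; simpl; [lra|].
  destruct (p q); simpl; rewrite IH; ring.
Qed.

Section DisjointIntervals.
Variable Phi : R -> R.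
Hypothesis Phi_mono : forall u v, u <= v -> Phi u <= Phi v.

(* Induction on the number of intervals: one interval cuts
   [L, U] in two, and every other interval lies in one of the two parts. *)
Lemma disjoint_increments (a g : nat -> R) (l : list nat) (L U : R) :
  NoDup l -> L <= U ->
  (forall j, In j l -> 0 < g j /\ L <= a j /\ a j + g j <= U) ->
  (forall j k, In j l -> In k l -> j <> k -> a j + g j <= a k \/ a k + g k <= a j) ->
  sumR (fun j => Phi (a j + g j) - Phi (a j)) l <= Phi U - Phi L.
Proof.
  revert L U.
  induction l as [l IH] using (well_founded_induction
    (wf_inverse_image _ nat lt (@length nat) Wf_nat.lt_wf)).
  intros L U Hnd HLU Hin Hdisj.
  destruct l as [|h t].
  { unfold sumR; simpl. pose proof (Phi_mono L U HLU); lra. }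
  apply NoDup_cons_iff in Hnd as [Hh Hnd].
  destruct (Hin h (or_introl eq_refl)) as (Hgh & HLh & HhU).
  set (before := fun q => if Rlt_dec (a q) (a h) then true else false).
  set (incr := fun j => Phi (a j + g j) - Phi (a j)).
  assert (Hside : forall j, In j t ->
            (a j < a h /\ a j + g j <= a h) \/ (a h <= a j /\ a h + g h <= a j)).
  { intros j Hj.
    assert (Hjh : j <> h) by (intros ->; contradiction).
    destruct (Hin j (or_intror Hj)) as (Hgj & _ & _).
    destruct (Hdisj j h (or_intror Hj) (or_introl eq_refl) Hjh); lra. }
  assert (Hsub : forall p j, In j (filter p t) -> In j (h :: t)).
  { intros p j Hj. apply filter_In in Hj as [Hj _]. now right. }
  assert (Hlen : forall p, (length (filter p t) < length (h :: t))%nat).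
  { intros p. pose proof (filter_length_le p t). simpl; lia. }
  assert (Hleft : sumR incr (filter before t) <= Phi (a h) - Phi L).
  { apply IH; [apply Hlen | now apply NoDup_filter | lra | |].
    - intros j Hj. pose proof Hj as Hj'. apply filter_In in Hj' as [Hjt Hb].
      unfold before in Hb. destruct (Rlt_dec (a j) (a h)); [|discriminate].
      destruct (Hin j (Hsub _ _ Hj)) as (? & ? & ?).
      destruct (Hside j Hjt); lra.
    - intros j k Hj Hk. apply Hdisj; eapply Hsub; eassumption. }
  assert (Hright : sumR incr (filter (fun q => negb (before q)) t) <= Phi U - Phi (a h + g h)).
  { apply IH; [apply Hlen | now apply NoDup_filter | lra | |].
    - intros j Hj. pose proof Hj as Hj'. apply filter_In in Hj' as [Hjt Hb].
      unfold before in Hb. destruct (Rlt_dec (a j) (a h)); [discriminate|].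
      destruct (Hin j (Hsub _ _ Hj)) as (? & ? & ?).
      destruct (Hside j Hjt); lra.
    - intros j k Hj Hk. apply Hdisj; eapply Hsub; eassumption. }
  change (sumR incr (h :: t)) with (incr h + sumR incr t).
  rewrite (sumR_partition before incr t).
  unfold incr at 1; lra.
Qed.
End DisjointIntervals.

(* A primitive of t |-> |t - c|. *)
Definition abs_prim (c t : R) : R := (t - c) * Rabs (t - c) / 2.

Lemma abs_prim_mono (c u v : R) : u <= v -> abs_prim c u <= abs_prim c v.
Proof.
  intros Huv; unfold abs_prim.
  destruct (Rle_dec 0 (u - c)); destruct (Rle_dec 0 (v - c));
    [rewrite !Rabs_pos_eq by lra | lra
    | rewrite (Rabs_left (u - c)), (Rabs_pos_eq (v - c)) by lra
    | rewrite !Rabs_left by lra]; nra.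
Qed.

(* Midpoint estimate (Jensen for the convex |t - c|): the length of an interval
   times |midpoint - c| is at most the integral of |t - c| over it. *)
Lemma midpoint_le_abs_prim (c a g : R) : 0 <= g ->
  g * Rabs (a + g / 2 - c) <= abs_prim c (a + g) - abs_prim c a.
Proof.
  intros Hg; unfold abs_prim.
  set (u := a - c); set (v := a + g - c).
  replace (a + g / 2 - c) with ((u + v) / 2) by (unfold u, v; field).
  replace g with (v - u) at 1 by (unfold u, v; ring).
  assert (Huv : u <= v) by (unfold u, v; lra).
  clearbody u v.
  destruct (Rle_dec 0 u); [|destruct (Rle_dec 0 v)].
  - rewrite !Rabs_pos_eq by lra; nra.
  - rewrite (Rabs_left u), (Rabs_pos_eq v) by lra.
    destruct (Rle_dec 0 (u + v)); [rewrite Rabs_pos_eq by lra | rewrite Rabs_left by lra]; nra.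
  - rewrite !Rabs_left by lra; nra.
Qed.

Lemma frac_part_shift (r : R) (z : Z) : 0 <= r - IZR z < 1 -> frac_part r = r - IZR z.
Proof.
  intros H; unfold frac_part, Int_part.
  assert (Hup : (z + 1)%Z = up r) by (apply tech_up; rewrite plus_IZR; simpl; lra).
  rewrite <- Hup, minus_IZR, plus_IZR; simpl; ring.
Qed.

Lemma fold_Rmin_le (f : nat -> R) (l : list nat) (k : nat) :
  In k l -> fold_right Rmin 1 (map f l) <= f k.
Proof.
  induction l as [|h t IH]; simpl; [tauto|]. intros [->|Hk].
  - apply Rmin_l.
  - eapply Rle_trans; [apply Rmin_r | auto].
Qed.

Lemma fold_Rmin_le_1 (f : nat -> R) (l : list nat) : fold_right Rmin 1 (map f l) <= 1.
Proof.
  induction l as [|h t IH]; simpl; [lra|]. eapply Rle_trans; [apply Rmin_r | auto].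
Qed.

Lemma fold_Rmin_pos (f : nat -> R) (l : list nat) :
  (forall k, 0 < f k) -> 0 < fold_right Rmin 1 (map f l).
Proof.
  intros H; induction l as [|h t IH]; simpl; [lra|]. now apply Rmin_glb_lt.
Qed.

Lemma cwgap_pos (u v : R) : 0 < cwgap u v.
Proof.
  unfold cwgap, cwpos. destruct (Req_EM_T (frac_part (v - u)) 0); [lra|].
  pose proof (base_fp (v - u)); lra.
Qed.

Lemma next_gap_pos (n : nat) (x : nat -> R) (j : nat) : 0 < next_gap n x j.
Proof. apply fold_Rmin_pos; intros k; apply cwgap_pos. Qed.

Lemma next_gap_le_1 (n : nat) (x : nat -> R) (j : nat) : next_gap n x j <= 1.
Proof. apply fold_Rmin_le_1. Qed.

Lemma next_gap_le (n : nat) (x : nat -> R) (j k : nat) :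
  (k < n)%nat -> frac_part (x k - x j) <> 0 -> next_gap n x j <= frac_part (x k - x j).
Proof.
  intros Hk Hne. eapply Rle_trans; [apply (fold_Rmin_le _ _ k); apply in_seq; lia|].
  unfold cwgap, cwpos, antipode.
  replace (x k + / 2 - (x j + / 2)) with (x k - x j) by ring.
  destruct (Req_EM_T (frac_part (x k - x j)) 0); [contradiction | lra].
Qed.

(* Clockwise position of x_j seen from x_i, in [0,1).  Since all antipodes are
   shifted by the same half turn, it is also the clockwise position of the
   antipode of x_j seen from the antipode of x_i. *)
Definition relpos (x : nat -> R) (i j : nat) : R := frac_part (x j - x i).

Section RelativePositions.
Variables (x : nat -> R) (i : nat).
Local Notation a := (relpos x i).

Lemma relpos_bounds (j : nat) : 0 <= a j < 1.
Proof. unfold relpos. pose proof (base_fp (x j - x i)); lra. Qed.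

Lemma relpos_self : a i = 0.
Proof. unfold relpos. rewrite Rminus_diag, (frac_part_shift 0 0); simpl; lra. Qed.

Lemma diff_as_relpos (j k : nat) :
  x k - x j = a k - a j + IZR (Int_part (x k - x i) - Int_part (x j - x i)).
Proof. unfold relpos, frac_part. rewrite minus_IZR; ring. Qed.

Lemma frac_diff_le (j k : nat) : a j <= a k -> frac_part (x k - x j) = a k - a j.
Proof.
  intros H. pose proof (relpos_bounds j); pose proof (relpos_bounds k).
  rewrite diff_as_relpos,
    (frac_part_shift _ (Int_part (x k - x i) - Int_part (x j - x i))); [ring | lra].
Qed.

Lemma frac_diff_gt (j k : nat) : a k < a j -> frac_part (x k - x j) = a k - a j + 1.
Proof.
  intros H. pose proof (relpos_bounds j); pose proof (relpos_bounds k).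
  rewrite diff_as_relpos,
    (frac_part_shift _ (Int_part (x k - x i) - Int_part (x j - x i) - 1)%Z);
    rewrite !minus_IZR; simpl; lra.
Qed.

Lemma first_occ_relpos (j k : nat) : (j < k)%nat -> first_occ x k = true -> a j <> a k.
Proof.
  intros Hjk Hf E. unfold first_occ in Hf.
  apply Bool.negb_true_iff, Bool.not_true_iff_false in Hf. apply Hf, existsb_exists.
  exists j. split; [apply in_seq; lia|].
  destruct (Req_EM_T (cwpos (x k) (x j)) 0) as [|Hne]; [reflexivity|].
  exfalso; apply Hne. unfold cwpos. rewrite frac_diff_le; lra.
Qed.

Variable n : nat.
Local Notation g := (next_gap n x).

Lemma arcs_ordered (j k : nat) : (k < n)%nat -> a j < a k -> a j + g j <= a k.
Proof.
  intros Hk H. pose proof (next_gap_le n x j k Hk) as Hgap.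
  rewrite frac_diff_le in Hgap by lra. specialize (Hgap ltac:(lra)). lra.
Qed.

Lemma first_occ_arcs_disjoint (j k : nat) :
  In j (filter (first_occ x) (seq 0 n)) -> In k (filter (first_occ x) (seq 0 n)) -> j <> k ->
  a j + g j <= a k \/ a k + g k <= a j.
Proof.
  intros Hj Hk Hjk.
  apply filter_In in Hj as [Hj Hfj]; apply filter_In in Hk as [Hk Hfk].
  apply in_seq in Hj; apply in_seq in Hk.
  assert (Hne : a j <> a k).
  { destruct (Nat.lt_gt_cases j k) as [[Hlt|Hlt] _]; [exact Hjk| |].
    - now apply first_occ_relpos.
    - intros E. apply (first_occ_relpos k j Hlt Hfj); auto. }
  destruct (Rlt_dec (a j) (a k)).
  - left; apply arcs_ordered; [lia | assumption].
  - right; apply arcs_ordered; [lia | lra].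
Qed.

Hypothesis Hi : (i < n)%nat.

(* Since the antipode of x_i is itself a cut point, no arc wraps past
   position 1: every arc lies inside [0,1]. *)
Lemma arc_in_unit (j : nat) : 0 < g j /\ 0 <= a j /\ a j + g j <= 1.
Proof.
  pose proof (relpos_bounds j). pose proof (next_gap_pos n x j).
  split; [assumption | split; [lra|]].
  destruct (Req_dec (a j) 0) as [E|E].
  - rewrite E. pose proof (next_gap_le_1 n x j); lra.
  - assert (Hij : a i < a j) by (rewrite relpos_self; lra).
    pose proof (next_gap_le n x j i Hi) as Hgap.
    rewrite (frac_diff_gt j i Hij), relpos_self in Hgap.
    specialize (Hgap ltac:(lra)); lra.
Qed.

Lemma midpoint_dist (j : nat) :
  cdist (antipode (x j) + g j / 2) (x i) = Rabs (a j + g j / 2 - / 2).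
Proof.
  destruct (arc_in_unit j) as (Hg & Ha & Hend).
  unfold cdist, antipode.
  assert (D : x j + / 2 + g j / 2 - x i = (a j + g j / 2 + / 2) + IZR (Int_part (x j - x i))).
  { unfold relpos, frac_part; ring. }
  rewrite D.
  destruct (Rlt_dec (a j + g j / 2) (/ 2)).
  - rewrite (frac_part_shift _ (Int_part (x j - x i))) by lra.
    rewrite Rabs_left, Rmin_right by lra; lra.
  - rewrite (frac_part_shift _ (Int_part (x j - x i) + 1)) by (rewrite plus_IZR; simpl; lra).
    rewrite plus_IZR, Rabs_pos_eq, Rmin_left by (simpl; lra); simpl; lra.
Qed.

End RelativePositions.

Theorem mainTheorem13 (n : nat) (x : nat -> R) :
  ~ on_one_semicircle n x ->
  forall i : nat, (i < n)%nat -> rc_cost n x (x i) <= / 4.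
Proof.
  intros _ i Hi. unfold rc_cost. rewrite sumR_if.
  set (arcs := filter (first_occ x) (seq 0 n)).
  set (a := relpos x i); set (g := next_gap n x).
  (* 1/4 is the mean distance of a uniform point of the circle to x_i *)
  assert (Hquarter : abs_prim (/ 2) 1 - abs_prim (/ 2) 0 = / 4).
  { unfold abs_prim. rewrite Rabs_pos_eq, Rabs_left by lra. field. }
  apply Rle_trans with
    (sumR (fun j => abs_prim (/ 2) (a j + g j) - abs_prim (/ 2) (a j)) arcs).
  - apply sumR_le; intros j _.
    unfold a, g; rewrite (midpoint_dist x i n Hi j).
    apply midpoint_le_abs_prim. apply Rlt_le, next_gap_pos.
  - rewrite <- Hquarter.
    apply disjoint_increments.
    + apply abs_prim_mono.
    + apply NoDup_filter, seq_NoDup.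
    + lra.
    + intros j _. apply (arc_in_unit x i n Hi).
    + apply (first_occ_arcs_disjoint x i n).
Qed.
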